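(* For every $n\ge 2$, the set $\mathsf{BIAS}_n$ has exactly $(n-1)!$ elements.
   Context: An affine permutation of size $n$ is a bijection $w:\mathbb{Z}\to\mathbb{Z}$ with $w(i+n)=w(i)+n$ for all $i$ and $w(1)+\cdots+w(n)=\binom{n+1}{2}$; equivalently it is determined by its base window $[w_1,\dots,w_n]=[w(1),\dots,w(n)]$, and a sequence of integers is a base window iff its entries have distinct residues mod $n$ and sum to $\binom{n+1}{2}$. $\widetilde{S}_n^\circ$ denotes the set of such $w$ with $w_1<\cdots<w_n$. $\mathsf{BIAS}_n$ (the minimal abaci) is the set of $w\in\widetilde{S}_n^\circ$ with $w_{i+1}-w_i\in\{1,\dots,n-1\}$ for all $1\le i\le n-1$. *)

From mathcomp Require Import all_boot all_order all_algebra.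
Set Implicit Arguments. Unset Strict Implicit. Unset Printing Implicit Defensive.
Import Order.TTheory GRing.Theory Num.Theory.
Local Open Scope ring_scope.

(* An affine permutation of size n is identified with its base window
   [w_1; ...; w_n] : seq int. *)
Definition is_window (n : nat) (w : seq int) : bool :=
  [&& size w == n,
      uniq [seq (x %% (n%:Z))%Z | x <- w] &
      \sum_(x <- w) x == ('C(n.+1, 2))%:Z].

Definition gaps_ok (n : nat) (w : seq int) : bool :=
  sorted (fun a b : int => (1 <= b - a) && (b - a <= (n%:Z) - 1)) w.

Definition in_Sn_circ (n : nat) (w : seq int) : bool :=
  is_window n w && sorted (fun a b : int => a < b) w.

Definition in_BIAS (n : nat) (w : seq int) : bool :=
  in_Sn_circ n w && gaps_ok n w.

From mathcomp Require Import all_boot all_order all_algebra ring zify.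
Set Implicit Arguments. Unset Strict Implicit. Unset Printing Implicit Defensive.
Import Order.TTheory GRing.Theory Num.Theory.
Local Open Scope ring_scope.

(* A window w of BIAS_n is determined by its first entry w_1 and by the
   residues r_i = (w_(i+1) - w_1) mod n: these are distinct and nonzero, hence
   a permutation of 1..n-1, and since every gap lies in (0, n) each gap is the
   residue of the difference of two consecutive r_i.  Conversely, any
   permutation r of 1..n-1 rebuilds in this way an increasing sequence with
   gaps in (0, n) starting at 0; its sum is congruent to 1 + ... + (n-1) =
   C(n, 2) modulo n, and C(n+1, 2) = C(n, 2) + n, so exactly one translate of
   it sums to C(n+1, 2).  Hence BIAS_n is in bijection with the permutations
   of 1..n-1. *)

Definition small_gap (N a b : int) : bool := (1 <= b - a) && (b - a <= N - 1).

(* If the offset of the entry [c] from the first entry has residue [p], the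
   next entry is the least integer [>= c] whose offset has residue [x], the
   head of [rs]. *)
Fixpoint ascent (N c p : int) (rs : seq int) : seq int :=
  if rs is x :: rs' then (c + modz (x - p) N) :: ascent N (c + modz (x - p) N) x rs'
  else [::].

Section Residues.

Variable N : int.

Lemma dvdz_modz_sub x : (N %| modz x N - x)%Z.
Proof. by rewrite -eqz_mod_dvd modz_mod. Qed.

Lemma eq_modz_dvd x y : (N %| x - y)%Z -> modz x N = modz y N.
Proof. by move=> dvd_xy; apply/eqP; rewrite eqz_mod_dvd. Qed.

Lemma uniq_modz_shift a s :
  uniq [seq modz (y + a) N | y <- s] = uniq [seq modz y N | y <- s].
Proof.
apply/idP/idP => [|uniq_s].
  rewrite (_ : [seq modz (y + a) N | y <- s] =
               [seq modz (z + a) N | z <- [seq modz y N | y <- s]]) => [/map_uniq //|].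
  by rewrite -map_comp; apply: eq_map => y /=; rewrite modzDml.
move: uniq_s; rewrite (_ : [seq modz y N | y <- s] =
     [seq modz (z - a) N | z <- [seq modz (y + a) N | y <- s]]) => [/map_uniq //|].
by rewrite -map_comp; apply: eq_map => y /=; rewrite modzDml addrK.
Qed.

Lemma dvdz_sum_sub_modz s :
  (N %| \sum_(y <- s) y - \sum_(y <- s) modz y N)%Z.
Proof.
by rewrite -sumrB; apply: rpred_sum => y _; rewrite -opprB rpredN dvdz_modz_sub.
Qed.

Lemma sum_shift (d : int) s :
  \sum_(y <- [seq y + d | y <- s]) y = \sum_(y <- s) y + d *+ size s.
Proof. by rewrite big_map big_split /= big_const_seq count_predT -Monoid.iteropE. Qed.

Lemma size_ascent c p rs : size (ascent N c p rs) = size rs.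
Proof. by elim: rs c p => //= x rs IH c p; rewrite IH. Qed.

Lemma ascentD c d p rs :
  ascent N (c + d) p rs = [seq y + d | y <- ascent N c p rs].
Proof. by elim: rs c p => //= x rs IH c p; rewrite addrAC IH. Qed.

Lemma ascent_mod c p rs :
  [seq modz (y - c + p) N | y <- ascent N c p rs] = [seq modz x N | x <- rs].
Proof.
elim: rs c p => //= x rs IH c p; congr (_ :: _).
  apply: eq_modz_dvd.
  have -> : c + modz (x - p) N - c + p - x = modz (x - p) N - (x - p) by ring.
  exact: dvdz_modz_sub.
rewrite -(IH (c + modz (x - p) N) x); apply: eq_map => y; apply: eq_modz_dvd.
have -> : y - c + p - (y - (c + modz (x - p) N) + x) = modz (x - p) N - (x - p) by ring.
exact: dvdz_modz_sub.
Qed.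

Lemma ascent_residues c p w0 ws :
  path (small_gap N) c ws -> modz p N = modz (c - w0) N ->
  ascent N c p [seq modz (y - w0) N | y <- ws] = ws.
Proof.
elim: ws c p => //= y ws IH c p /andP[/andP[gap_ge1 gap_le] path_ws] p_mod.
have step : modz (modz (y - w0) N - p) N = y - c.
  rewrite -[RHS](@modz_small _ N); last by apply/andP; split; lia.
  apply: eq_modz_dvd.
  have -> : modz (y - w0) N - p - (y - c) =
            (modz (y - w0) N - (y - w0)) - (p - (c - w0)) by ring.
  by rewrite rpredB ?dvdz_modz_sub // -eqz_mod_dvd p_mod.
by rewrite step addrC subrK IH // modz_mod.
Qed.

Definition reduced (x : int) : bool := 0 <= x < N.

Hypothesis N_gt0 : 0 < N.

Lemma reduced_modz x : reduced (modz x N).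
Proof. by rewrite /reduced modz_ge0 ?ltz_pmod // gt_eqF. Qed.

Lemma ascent_modE a r :
  all reduced r -> [seq modz (y - a) N | y <- ascent N a 0 r] = r.
Proof.
move=> /allP r_reduced.
rewrite -[RHS](@map_id_in _ (modz^~ N)) => [|x /r_reduced]; last exact: modz_small.
by rewrite -(ascent_mod a 0); apply: eq_map => y; rewrite addr0.
Qed.

Lemma path_ascent c p rs :
  uniq (p :: rs) -> all reduced (p :: rs) -> path (small_gap N) c (ascent N c p rs).
Proof.
elim: rs c p => //= x rs IH c p /and3P[p_notin x_notin uniq_rs] /and3P[red_p red_x red_rs].
rewrite IH ?x_notin ?uniq_rs ?red_x ?red_rs // andbT /small_gap addrC addKr.
have /andP[ge0 ltN] := reduced_modz (x - p).
have : modz (x - p) N != 0.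
  apply: contraNneq p_notin => mod0.
  have : modz x N = modz p N.
    by apply: eq_modz_dvd; move: (dvdz_modz_sub (x - p)); rewrite mod0 sub0r rpredN.
  by rewrite !modz_small // => ->; rewrite mem_head.
by move=> nz; apply/andP; split; lia.
Qed.

End Residues.

Definition nonzero_residues (n : nat) : seq int := [seq i%:Z | i <- iota 1 n.-1].

Lemma uniq_nonzero_residues n : uniq (nonzero_residues n).
Proof. by rewrite map_inj_uniq ?iota_uniq // => i j []. Qed.

Lemma mem_nonzero_residues n x : (x \in nonzero_residues n) = (0 < x < n%:Z).
Proof.
apply/mapP/idP => [[i]|]; first by rewrite mem_iota => /andP[i_ge1 i_lt] ->; lia.
case: x => [i|//] /andP[i_gt0 i_lt].
by exists i => //; rewrite mem_iota; lia.
Qed.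

Lemma sum_nonzero_residues n : \sum_(x <- nonzero_residues n) x = 'C(n, 2)%:Z.
Proof.
rewrite big_map -bin2_sum -[RHS]natz natr_sum /index_iota subn0.
case: n => [|n] /=; first by rewrite !big_nil.
by rewrite big_cons add0r; apply: eq_bigr => i _; rewrite natz.
Qed.

Lemma reduced_nonzero_residues n r :
  (0 < n)%N -> perm_eq r (nonzero_residues n) -> all (reduced n) (0 :: r).
Proof.
move=> n_gt0 perm_r; apply/allP => x; rewrite inE (perm_mem perm_r).
by rewrite mem_nonzero_residues /reduced => /orP[/eqP ->|]; lia.
Qed.

Definition first_entry (n : nat) (r : seq int) : int :=
  divz ('C(n.+1, 2)%:Z - \sum_(y <- ascent n 0 0 r) y) n.

Definition window_of (n : nat) (r : seq int) : seq int :=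
  first_entry n r :: ascent n (first_entry n r) 0 r.

Definition residues_of (n : nat) (w : seq int) : seq int :=
  [seq modz (y - head 0 w) n | y <- behead w].

Lemma sum_window n a r : size r = n.-1 -> (0 < n)%N ->
  \sum_(y <- a :: ascent n a 0 r) y = a * n + \sum_(y <- ascent n 0 0 r) y.
Proof.
move=> size_r; rewrite big_cons -{2}(add0r a) ascentD sum_shift size_ascent size_r.
by case: n {size_r} => // n _; rewrite -natz mulr_natr mulrS /=; ring.
Qed.

Lemma window_ofK (n : nat) r : all (reduced n) r -> residues_of n (window_of n r) = r.
Proof. by move=> r_reduced; rewrite /residues_of /= ascent_modE. Qed.

Lemma window_of_BIAS n r :
  (2 <= n)%N -> perm_eq r (nonzero_residues n) -> in_BIAS n (window_of n r).
Proof.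
move=> n_ge2 perm_r; have n_gt0 : (0 < n)%N by exact: ltnW.
have N_gt0 : 0 < n%:Z by rewrite ltz_nat.
have red0r := reduced_nonzero_residues n_gt0 perm_r.
have /andP[_ red_r] := red0r.
have size_r : size r = n.-1 by rewrite (perm_size perm_r) size_map size_iota.
have uniq0r : uniq (0 :: r).
  by rewrite /= (perm_uniq perm_r) uniq_nonzero_residues (perm_mem perm_r) mem_nonzero_residues ltxx.
have sum_mod : \sum_(y <- ascent n 0 0 r) modz y n = 'C(n, 2)%:Z.
  rewrite -sum_nonzero_residues -(perm_big _ perm_r).
  rewrite -[X in _ = \sum_(x <- X) x](ascent_modE 0 red_r) big_map.
  by apply: eq_bigr => y _; rewrite subr0.
have first_entryE :
    first_entry n r * n = 'C(n.+1, 2)%:Z - \sum_(y <- ascent n 0 0 r) y.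
  apply: divzK.
  have -> : 'C(n.+1, 2)%:Z - \sum_(y <- ascent n 0 0 r) y =
      n%:Z - (\sum_(y <- ascent n 0 0 r) y - \sum_(y <- ascent n 0 0 r) modz y n).
    by rewrite sum_mod binS bin1 PoszD; ring.
  by rewrite rpredB ?dvdzz ?dvdz_sum_sub_modz.
set a := first_entry n r in first_entryE *.
have gaps : path (small_gap n) a (ascent n a 0 r) by exact: path_ascent.
have increasing : path <%R a (ascent n a 0 r).
  by apply: sub_path gaps => x y /andP[gap_ge1 _]; lia.
have uniq_w : uniq [seq modz y n | y <- a :: ascent n a 0 r].
  by rewrite -(uniq_modz_shift _ (- a)) map_cons subrr mod0z ascent_modE.
rewrite /in_BIAS /in_Sn_circ /is_window /gaps_ok /window_of -/a /= gaps increasing !andbT.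
apply/and3P; split=> //; first by rewrite size_ascent size_r prednK.
by rewrite sum_window // first_entryE subrK.
Qed.

Lemma perm_residues_of n w :
  (0 < n)%N -> is_window n w -> perm_eq (residues_of n w) (nonzero_residues n).
Proof.
move=> n_gt0 /and3P[/eqP size_w uniq_w _].
have N_gt0 : 0 < n%:Z by rewrite ltz_nat.
case: w size_w uniq_w => [|w0 ws] size_w uniq_w; first by rewrite -size_w in n_gt0.
rewrite /residues_of /=; set r := [seq modz (y - w0) n | y <- ws].
have /andP[r_nz uniq_r] : uniq (0 :: r).
  by move: uniq_w; rewrite -(uniq_modz_shift _ (- w0)) map_cons subrr mod0z.
have size_r : size (nonzero_residues n) = size r.
  by rewrite size_map size_iota size_map -size_w.
have r_sub : {subset r <= nonzero_residues n}.
  move=> x x_in_r; rewrite mem_nonzero_residues.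
  have x_nz : x != 0 by apply: contraNneq r_nz => <-.
  move: x_in_r => /mapP[y _ ->] in x_nz *.
  by have := reduced_modz N_gt0 (y - w0); rewrite /reduced; lia.
have [_ eq_r] := uniq_min_size uniq_r r_sub (eq_leq size_r).
exact: uniq_perm uniq_r (uniq_nonzero_residues n) eq_r.
Qed.

Lemma residues_ofK n w :
  (0 < n)%N -> in_BIAS n w -> window_of n (residues_of n w) = w.
Proof.
move=> n_gt0 /andP[/andP[/and3P[/eqP size_w _ /eqP sum_w] _] gaps].
case: w size_w sum_w gaps => [|w0 ws] size_w sum_w gaps; first by rewrite -size_w in n_gt0.
rewrite /residues_of /=; set r := [seq modz (y - w0) n | y <- ws].
have ascent_r : ascent n w0 0 r = ws by rewrite ascent_residues // subrr mod0z.
have size_r : size r = n.-1 by rewrite size_map -size_w.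
have first_entry_r : first_entry n r = w0.
  rewrite /first_entry -sum_w -ascent_r sum_window // addrK mulzK //.
  by rewrite gt_eqF // ltz_nat.
by rewrite /window_of first_entry_r ascent_r.
Qed.

Theorem mainTheorem3 (n : nat) (hn : (2 <= n)%N) :
  exists s : seq (seq int),
    [/\ uniq s, size s = (n.-1)`! & forall w : seq int, (w \in s) = in_BIAS n w].
Proof.
have n_gt0 : (0 < n)%N by exact: ltnW.
exists [seq window_of n r | r <- permutations (nonzero_residues n)]; split.
- rewrite map_inj_in_uniq ?permutations_uniq // => r1 r2.
  rewrite !mem_permutations => /(reduced_nonzero_residues n_gt0)/andP[_ red_r1].
  move=> /(reduced_nonzero_residues n_gt0)/andP[_ red_r2] eq_w.
  by rewrite -(window_ofK red_r1) eq_w window_ofK.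
- by rewrite size_map size_permutations ?uniq_nonzero_residues // size_map size_iota.
- move=> w; apply/mapP/idP => [[r]|w_BIAS].
    by rewrite mem_permutations => perm_r ->; exact: window_of_BIAS.
  exists (residues_of n w); last by rewrite residues_ofK.
  by rewrite mem_permutations perm_residues_of //; case/andP: w_BIAS => /andP[].
Qed.
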